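(* Assume $G\in\mathcal{RH}_\infty$ and let $K=(I+QG_{yu})^{-1}Q$ with $Q\in\mathcal{RH}_\infty$ and $G_{wu}QG_{yv}=0$ (i.e. $K$ is a retrofit controller). Let $\overline{G}\in\overline{\mathcal G}$ and let $\overline{Q}:=\overline{G}(I-G_{wv}\overline{G})^{-1}\in\mathcal{RH}_\infty$ be its Youla parameter, so that $\overline{G}=(I+\overline{Q}G_{wv})^{-1}\overline{Q}$. Then the closed-loop transfer matrix $T_{zd}$ from $d$ to $z$ of the feedback system formed by $G$, $u=Ky$ and $v=\overline{G}w$ satisfies $$T_{zd}=M_{zd}(Q)+M_{zv}(Q)\,\overline{Q}\,M_{wd}(Q),$$ where $M_{zd}(Q):=G_{zd}+G_{zu}QG_{yd}$, $M_{zv}(Q):=G_{zv}+G_{zu}QG_{yv}$, $M_{wd}(Q):=G_{wd}+G_{wu}QG_{yd}$.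
   Context: A subsystem is a proper real rational transfer matrix $G$ with inputs $(v,d,u)$ (interaction input, disturbance input, control input) and outputs $(w,z,y)$ (interaction output, evaluation output, measurement output): $$\begin{bmatrix} w\\ z\\ y\end{bmatrix}=\begin{bmatrix} G_{wv}&G_{wd}&G_{wu}\\ G_{zv}&G_{zd}&G_{zu}\\ G_{yv}&G_{yd}&G_{yu}\end{bmatrix}\begin{bmatrix} v\\ d\\ u\end{bmatrix}.$$ An environment is a proper real rational transfer matrix $\overline{G}$ closing the interaction loop by $v=\overline{G}w$; a controller is a proper real rational $K$ closing $u=Ky$. $\mathcal{RH}_\infty$ is the set of stable, proper, real rational transfer matrices. All feedback interconnections are assumed well-posed; internal stability is in the standard sense. The preexisting system is $G_{\rm pre}$: the loop $w=G_{wv}v$, $v=\overline{G}w$. The set of admissible environments is $\overline{\mathcal G}:=\{\overline{G}: G_{\rm pre}\text{ is internally stable}\}$. *)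

From HB Require Import structures.
From mathcomp Require Import all_boot all_order all_algebra.
Set Implicit Arguments. Unset Strict Implicit. Unset Printing Implicit Defensive.
Import Order.TTheory GRing.Theory Num.Theory.
Local Open Scope ring_scope.

(* Transfer functions: rational functions in s with coefficients in a numeric
   algebraically closed field C (e.g. the complex numbers); "real rational"
   means representable with real coefficients. *)
Definition TF (C : numClosedFieldType) := {fraction {poly C}}.

Definition proper_real_rat (C : numClosedFieldType) (x : TF C) : Prop :=
  exists p q : {poly C},
    [/\ q != 0, p \is a polyOver Num.real, q \is a polyOver Num.real,
        (size p <= size q)%N & x = (FracField.tofrac p) / (FracField.tofrac q)].

Definition RHinf_rat (C : numClosedFieldType) (x : TF C) : Prop :=
  exists p q : {poly C},
    [/\ q != 0, p \is a polyOver Num.real, q \is a polyOver Num.real,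
        (size p <= size q)%N & x = (FracField.tofrac p) / (FracField.tofrac q)]
    /\ (forall z : C, root q z -> 'Re z < 0).

Definition proper_real_mx (C : numClosedFieldType) m n (A : 'M[TF C]_(m, n)) :=
  forall i j, proper_real_rat (A i j).

Definition RHinf_mx (C : numClosedFieldType) m n (A : 'M[TF C]_(m, n)) :=
  forall i j, RHinf_rat (A i j).

(* Internal stability of the preexisting system  w = Gwv v,  v = Gbar w:
   well-posed, and all four maps (e1,e2) -> (w,v) of the loop
   w = Gwv v + e1, v = Gbar w + e2 are in RH_infinity. *)
Definition internally_stable_pre (C : numClosedFieldType) nw nv
    (Gwv : 'M[TF C]_(nw, nv)) (Gbar : 'M[TF C]_(nv, nw)) : Prop :=
  let S := invmx (1%:M - Gwv *m Gbar) in
  [/\ (1%:M - Gwv *m Gbar) \in unitmx,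
      RHinf_mx S, RHinf_mx (S *m Gwv), RHinf_mx (Gbar *m S)
    & RHinf_mx (1%:M + Gbar *m S *m Gwv)].

Definition admissible_env (C : numClosedFieldType) nw nv
    (Gwv : 'M[TF C]_(nw, nv)) (Gbar : 'M[TF C]_(nv, nw)) : Prop :=
  proper_real_mx Gbar /\ internally_stable_pre Gwv Gbar.

Definition loop_eqs (C : numClosedFieldType) nw nz ny nv nd nu
    (Gwv : 'M[TF C]_(nw, nv)) (Gwd : 'M[TF C]_(nw, nd)) (Gwu : 'M[TF C]_(nw, nu))
    (Gzv : 'M[TF C]_(nz, nv)) (Gzd : 'M[TF C]_(nz, nd)) (Gzu : 'M[TF C]_(nz, nu))
    (Gyv : 'M[TF C]_(ny, nv)) (Gyd : 'M[TF C]_(ny, nd)) (Gyu : 'M[TF C]_(ny, nu))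
    (K : 'M[TF C]_(nu, ny)) (Gbar : 'M[TF C]_(nv, nw))
    (d : 'cV[TF C]_nd) (w : 'cV[TF C]_nw) (z : 'cV[TF C]_nz) (y : 'cV[TF C]_ny)
    (v : 'cV[TF C]_nv) (u : 'cV[TF C]_nu) : Prop :=
  [/\ w = Gwv *m v + Gwd *m d + Gwu *m u,
      z = Gzv *m v + Gzd *m d + Gzu *m u,
      y = Gyv *m v + Gyd *m d + Gyu *m u,
      u = K *m y
    & v = Gbar *m w].

Definition is_closed_loop_Tzd (C : numClosedFieldType) nw nz ny nv nd nu
    (Gwv : 'M[TF C]_(nw, nv)) (Gwd : 'M[TF C]_(nw, nd)) (Gwu : 'M[TF C]_(nw, nu))
    (Gzv : 'M[TF C]_(nz, nv)) (Gzd : 'M[TF C]_(nz, nd)) (Gzu : 'M[TF C]_(nz, nu))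
    (Gyv : 'M[TF C]_(ny, nv)) (Gyd : 'M[TF C]_(ny, nd)) (Gyu : 'M[TF C]_(ny, nu))
    (K : 'M[TF C]_(nu, ny)) (Gbar : 'M[TF C]_(nv, nw))
    (T : 'M[TF C]_(nz, nd)) : Prop :=
  forall d : 'cV[TF C]_nd,
    (exists w z y v u,
       loop_eqs Gwv Gwd Gwu Gzv Gzd Gzu Gyv Gyd Gyu K Gbar d w z y v u)
    /\ (forall w z y v u,
       loop_eqs Gwv Gwd Gwu Gzv Gzd Gzu Gyv Gyd Gyu K Gbar d w z y v u ->
       z = T *m d).

From HB Require Import structures.
From mathcomp Require Import all_boot all_order all_algebra.
Import Order.TTheory GRing.Theory Num.Theory.
Local Open Scope ring_scope.

(* The computation is purely algebraic and holds for matrices over any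
   commutative ring with units.  The argument has three steps:
   1. [controller_equation]: with K = (I + Q Gyu)^-1 Q, the controller equation
      u = K (a + Gyu u) is equivalent to the open-loop law u = Q a, so the
      measurement feedback through Gyu disappears;
   2. [lft_expansion]: substituting u = Q (Gyv v + Gyd d) into an output row
      (Gav, Gad, Gau) of G gives (Gav + Gau Q Gyv) v + (Gad + Gau Q Gyd) d; for
      the interaction row the retrofit condition Gwu Q Gyv = 0 leaves
      w = Gwv v + Mwd d, for the evaluation row it gives z = Mzv v + Mzd d;
   3. [environment_loop]: closing v = Gbar w around w = Gwv v + e has the
      unique solution w = (I - Gwv Gbar)^-1 e, hence v = Qbar e. *)

Section LoopAlgebra.

Context {R : comUnitRingType}.

Lemma unitmx_solve {n k} {P : 'M[R]_n} {b u : 'M[R]_(n, k)} :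
  P \in unitmx -> (u = invmx P *m b) <-> (P *m u = b).
Proof.
move=> unitP; split=> [-> | <-]; rewrite mulmxA ?(mulmxV unitP) ?(mulVmx unitP).
all: by rewrite mul1mx.
Qed.

Lemma controller_equation {m n k} {Q : 'M[R]_(n, m)} {Gyu : 'M[R]_(m, n)}
    {a : 'M[R]_(m, k)} {u : 'M[R]_(n, k)} :
  (1%:M + Q *m Gyu) \in unitmx ->
  (u = invmx (1%:M + Q *m Gyu) *m Q *m (a + Gyu *m u)) <-> (u = Q *m a).
Proof.
move=> unitP; rewrite -mulmxA; apply: iff_trans (unitmx_solve unitP) _.
rewrite mulmxDl mul1mx mulmxDr mulmxA.
by split=> [/addIr | ->].
Qed.

Lemma lft_expansion m n p q k l (Gav : 'M[R]_(m, n)) (Gad : 'M[R]_(m, p))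
    (Gau : 'M[R]_(m, q)) (Q : 'M[R]_(q, l)) (Gyv : 'M[R]_(l, n))
    (Gyd : 'M[R]_(l, p)) (v : 'M[R]_(n, k)) (d : 'M[R]_(p, k)) :
  Gav *m v + Gad *m d + Gau *m (Q *m (Gyv *m v + Gyd *m d))
  = (Gav + Gau *m Q *m Gyv) *m v + (Gad + Gau *m Q *m Gyd) *m d.
Proof. by rewrite !mulmxDr !mulmxDl !mulmxA addrACA. Qed.

Lemma environment_loop m n k (Gwv : 'M[R]_(m, n)) (Gbar : 'M[R]_(n, m))
    (e w : 'M[R]_(m, k)) :
  (1%:M - Gwv *m Gbar) \in unitmx ->
  (w = Gwv *m (Gbar *m w) + e) <-> (w = invmx (1%:M - Gwv *m Gbar) *m e).
Proof.
move=> unitS; apply: iff_sym; apply: iff_trans (unitmx_solve unitS) _.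
rewrite mulmxBl mul1mx mulmxA.
split=> [<- | {1}->]; first by rewrite addrC subrK.
by rewrite addrC addKr.
Qed.

End LoopAlgebra.

Theorem theorem2 (C : numClosedFieldType) (nw nz ny nv nd nu : nat)
    (Gwv : 'M[TF C]_(nw, nv)) (Gwd : 'M[TF C]_(nw, nd)) (Gwu : 'M[TF C]_(nw, nu))
    (Gzv : 'M[TF C]_(nz, nv)) (Gzd : 'M[TF C]_(nz, nd)) (Gzu : 'M[TF C]_(nz, nu))
    (Gyv : 'M[TF C]_(ny, nv)) (Gyd : 'M[TF C]_(ny, nd)) (Gyu : 'M[TF C]_(ny, nu))
    (Q : 'M[TF C]_(nu, ny)) (Gbar : 'M[TF C]_(nv, nw)) :
  RHinf_mx Gwv -> RHinf_mx Gwd -> RHinf_mx Gwu ->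
  RHinf_mx Gzv -> RHinf_mx Gzd -> RHinf_mx Gzu ->
  RHinf_mx Gyv -> RHinf_mx Gyd -> RHinf_mx Gyu ->
  RHinf_mx Q ->
  (1%:M + Q *m Gyu) \in unitmx ->
  Gwu *m Q *m Gyv = 0 ->
  admissible_env Gwv Gbar ->
  let K := invmx (1%:M + Q *m Gyu) *m Q in
  let Qbar := Gbar *m invmx (1%:M - Gwv *m Gbar) in
  let Mzd := Gzd + Gzu *m Q *m Gyd in
  let Mzv := Gzv + Gzu *m Q *m Gyv in
  let Mwd := Gwd + Gwu *m Q *m Gyd in
  is_closed_loop_Tzd Gwv Gwd Gwu Gzv Gzd Gzu Gyv Gyd Gyu K Gbar
    (Mzd + Mzv *m Qbar *m Mwd).
Proof.
move=> _ _ _ _ _ _ _ _ _ _ unitP retrofit [_ [unitS _ _ _ _]] K Qbar Mzd Mzv Mwd d.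
(* [law v] is the control input the retrofit controller produces for the
   interaction input v; under the retrofit condition it does not feed back
   into the interaction output. *)
pose law v := Q *m (Gyv *m v + Gyd *m d).
have interaction v : Gwv *m v + Gwd *m d + Gwu *m law v = Gwv *m v + Mwd *m d.
  by rewrite lft_expansion retrofit addr0.
split.
-
  pose w := invmx (1%:M - Gwv *m Gbar) *m (Mwd *m d).
  exists w, (Gzv *m (Gbar *m w) + Gzd *m d + Gzu *m law (Gbar *m w)),
    (Gyv *m (Gbar *m w) + Gyd *m d + Gyu *m law (Gbar *m w)),
    (Gbar *m w), (law (Gbar *m w)).
  split=> //; first by rewrite interaction; apply/environment_loop.
  by rewrite /K; apply/(controller_equation unitP).
-
  move=> w z y v u [Hw Hz Hy Hu Hv].
  have Hlaw : u = law v.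
    by apply/(controller_equation unitP); rewrite -Hy -/K.
  have Hw' : w = invmx (1%:M - Gwv *m Gbar) *m (Mwd *m d).
    by apply/environment_loop => //; rewrite -Hv -interaction -Hlaw.
  rewrite Hz Hlaw lft_expansion -/Mzv -/Mzd Hv Hw' /Qbar.
  by rewrite !mulmxA [RHS]mulmxDl addrC.
Qed.
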